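(* Let $p$ be an odd prime and let $\alpha,\beta\in\mathbb{Q}_p$. Suppose that the Browkin $p$-adic continued fraction expansions of $\alpha$ and $\beta$ have the same first $n+1$ partial quotients $b_0,b_1,\ldots,b_n$, and let $B_n$ be defined from these partial quotients by $B_{-2}=1$, $B_{-1}=0$, $B_i=b_iB_{i-1}+B_{i-2}$. Then $$\lvert \alpha-\beta\rvert_p<\frac{1}{\lvert B_n\rvert_p^2}.$$
   Context: Throughout, $p$ is an odd prime and $\lvert\cdot\rvert_p$ is the $p$-adic absolute value. Every $x\in\mathbb{Q}_p$ has a unique expansion $x=\sum_{i\ge r}a_ip^i$ with $r\in\mathbb{Z}$ and $a_i\in\{-\frac{p-1}{2},\ldots,\frac{p-1}{2}\}$; Browkin's function is $s(x)=\sum_{i=r}^{0}a_ip^i$ (so $s(x)=0$ if $r>0$). The Browkin continued fraction expansion $[b_0,b_1,\ldots]$ of $\alpha_0\in\mathbb{Q}_p$ is obtained by iterating $b_i=s(\alpha_i)$ and $\alpha_{i+1}=1/(\alpha_i-b_i)$ as long as $\alpha_i\neq b_i$; if $\alpha_i=b_i$ the expansion stops. The $b_i$ are the partial quotients. *)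

(* Q_p is given axiomatically as "a complete valued field in
   which Q is dense and whose absolute value restricts to |.|_p on Q", which
   characterizes Q_p up to isometric isomorphism. *)
From mathcomp Require Import all_boot all_order all_algebra.
Set Implicit Arguments. Unset Strict Implicit. Unset Printing Implicit Defensive.
Import Order.TTheory GRing.Theory Num.Theory.
Local Open Scope ring_scope.

Definition padic_val (p : nat) (q : rat) : int :=
  (logn p `|numq q|%N)%:Z - (logn p `|denq q|%N)%:Z.

Definition padic_abs (p : nat) (q : rat) : rat :=
  if q == 0 then 0 else (p%:Q) ^ (- padic_val p q).

Record is_Qp (p : nat) (K : fieldType) (abs : K -> rat) : Prop := {
  Qp_abs0 : forall x, (abs x == 0) = (x == 0);
  Qp_abs_ge0 : forall x, 0 <= abs x;
  Qp_absM : forall x y, abs (x * y) = abs x * abs y;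
  Qp_ultra : forall x y, abs (x + y) <= Num.max (abs x) (abs y);
  Qp_abs_rat : forall q : rat, abs (ratr q) = padic_abs p q;
  Qp_dense : forall (x : K) (eps : rat), 0 < eps ->
      exists q : rat, abs (x - ratr q) < eps;
  Qp_complete : forall u : nat -> K,
      (forall eps : rat, 0 < eps -> exists N, forall m n, (N <= m)%N -> (N <= n)%N ->
          abs (u m - u n) < eps) ->
      exists l : K, forall eps : rat, 0 < eps -> exists N, forall n, (N <= n)%N ->
          abs (l - u n) < eps
}.

Definition balanced_digit (p : nat) (a : int) : bool := `|a| <= ((p.-1)./2)%:Z.

Definition browkin_expansion (p : nat) (K : fieldType) (abs : K -> rat)
    (x : K) (r : int) (a : nat -> int) : Prop :=
  (forall k, balanced_digit p (a k)) /\
  forall eps : rat, 0 < eps -> exists N0, forall N, (N0 <= N)%N ->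
    abs (x - ratr (\sum_(k < N) (a k)%:~R * (p%:Q) ^ (k%:Z + r))) < eps.

(* s(x) = sum_{i=r}^{0} a_i p^i, i.e. the terms with exponent k + r <= 0 *)
Definition browkin_s_of (p : nat) (r : int) (a : nat -> int) : rat :=
  \sum_(k < `|1 - r|%N | (k%:Z + r <= 0)) (a k)%:~R * (p%:Q) ^ (k%:Z + r).

(* q = s(x) (the expansion is unique, so this relation is functional) *)
Definition browkin_s (p : nat) (K : fieldType) (abs : K -> rat) (x : K) (q : rat) : Prop :=
  exists r a, browkin_expansion p abs x r a /\ q = browkin_s_of p r a.

Definition browkin_cf_prefix (p : nat) (K : fieldType) (abs : K -> rat)
    (x : K) (b : nat -> rat) (n : nat) : Prop :=
  exists alpha : nat -> K,
    alpha 0%N = x /\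
    (forall i, (i <= n)%N -> browkin_s p abs (alpha i) (b i)) /\
    (forall i, (i < n)%N -> alpha i != ratr (b i) /\
                            alpha i.+1 = (alpha i - ratr (b i))^-1).

(* (B_{n-1}, B_n) with B_{-2} = 1, B_{-1} = 0, B_i = b_i B_{i-1} + B_{i-2} *)
Fixpoint Bpair (b : nat -> rat) (n : nat) : rat * rat :=
  match n with
  | 0 => (0, b 0%N * 0 + 1)
  | m.+1 => let: (u, v) := Bpair b m in (v, b m.+1 * v + u)
  end.

Definition Bcf (b : nat -> rat) (n : nat) : rat := (Bpair b n).2.

From mathcomp Require Import all_boot all_order all_algebra.
From mathcomp Require Import zify ring.
Import Order.TTheory GRing.Theory Num.Theory.
Local Open Scope ring_scope.

(* Each complete quotient a_(i+1) = (a_i - b_i)^-1 satisfies |a_(i+1)| > 1, because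
   |x - s(x)| < 1 for every x; hence |b_(i+1)| = |a_(i+1)| by the ultrametric inequality.
   The identity a_(i+1) - a'_(i+1) = (a'_i - a_i) a_(i+1) a'_(i+1) and
   |B_(i+1)| = |b_(i+1)| |B_i| (again ultrametric, as |B_(i-1)| < |B_i|) then give
   |a_i - a'_i| = |alpha - beta| |B_i|^2 by induction. Finally a_n and a'_n both lie
   within distance < 1 of b_n. *)

(* MathComp makes [ratr] a ring morphism only into a numFieldType; K is just a field
   of characteristic 0. *)
Section CharZeroRatr.
Context {K : fieldType}.
Hypothesis K0 : has_pchar0 K.

Lemma intrf_eq0 (z : int) : (z%:~R == 0 :> K) = (z == 0).
Proof.
have natf_eq0 := (pcharf0P K).1 K0.
by case: z => n; rewrite ?NegzE ?mulrNz ?oppr_eq0 natf_eq0.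
Qed.

Let denf_neq0 (x : rat) : (denq x)%:~R != 0 :> K.
Proof. by rewrite intrf_eq0 denq_neq0. Qed.

Lemma ratr_frac (a d : int) : d != 0 -> ratr (a%:~R / d%:~R) = a%:~R / d%:~R :> K.
Proof.
case: divqP => [_|k x k0 _]; first by rewrite eqxx.
by rewrite !intrM -mulf_div divff ?mul1r // intrf_eq0.
Qed.

Lemma ratrD (x y : rat) : ratr (x + y) = ratr x + ratr y :> K.
Proof.
rewrite -[x]divq_num_den -[y]divq_num_den addf_div ?intr_eq0 ?denq_neq0 //.
rewrite -!intrM -intrD ratr_frac ?mulf_neq0 ?denq_neq0 //.
by rewrite !divq_num_den /ratr intrD !intrM addf_div ?denf_neq0.
Qed.

Lemma ratrM (x y : rat) : ratr (x * y) = ratr x * ratr y :> K.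
Proof.
rewrite -[x]divq_num_den -[y]divq_num_den mulf_div -!intrM.
by rewrite ratr_frac ?mulf_neq0 ?denq_neq0 // !divq_num_den !intrM mulf_div.
Qed.

Lemma ratrX (x : rat) m : ratr (x ^+ m) = ratr x ^+ m :> K.
Proof.
elim: m => [|m IHm]; first exact: (ratr_int _ 1).
by rewrite !exprS ratrM IHm.
Qed.

End CharZeroRatr.

Lemma inv_shift_sub (F : fieldType) (x y c : F) : x != c -> y != c ->
  (x - c)^-1 - (y - c)^-1 = (y - x) * ((x - c)^-1 * (y - c)^-1).
Proof. by move=> xc yc; field; rewrite !subr_eq0 xc yc. Qed.

Lemma BpairS (b : nat -> rat) i :
  Bpair b i.+1 = (Bcf b i, b i.+1 * Bcf b i + (Bpair b i).1).
Proof. by rewrite /Bcf /=; case: Bpair. Qed.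

Definition browkin_cf_seq (p : nat) {K : fieldType} (abs : K -> rat)
    (a : nat -> K) (b : nat -> rat) (n : nat) : Prop :=
  (forall i, (i <= n)%N -> browkin_s p abs (a i) (b i)) /\
  (forall i, (i < n)%N -> a i != ratr (b i) /\ a i.+1 = (a i - ratr (b i))^-1).

Section PadicField.
Context {p : nat} {K : fieldType} {abs : K -> rat}.
Hypotheses (hK : is_Qp p abs) (p_prime : prime p).

Lemma abs0 : abs 0 = 0.
Proof. by apply/eqP; rewrite (Qp_abs0 hK). Qed.

Lemma abs1 : abs 1 = 1.
Proof.
have abs1_neq0 : abs 1 != 0 by rewrite (Qp_abs0 hK) oner_neq0.
by apply: (mulfI abs1_neq0); rewrite mulr1 -(Qp_absM hK) mulr1.
Qed.

Lemma absN x : abs (- x) = abs x.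
Proof.
suff absN1 : abs (-1) = 1 by rewrite -mulN1r (Qp_absM hK) absN1 mul1r.
have : abs (-1) ^+ 2 = 1 ^+ 2 by rewrite expr2 -(Qp_absM hK) mulrNN mulr1 abs1 expr1n.
by move/eqP; rewrite eqrXn2 ?(Qp_abs_ge0 hK) // => /eqP.
Qed.

Lemma abs_distC x y : abs (x - y) = abs (y - x).
Proof. by rewrite -absN opprB. Qed.

Lemma absV x : abs x^-1 = (abs x)^-1.
Proof.
have [->|x_neq0] := eqVneq x 0; first by rewrite invr0 abs0 invr0.
have absx_neq0 : abs x != 0 by rewrite (Qp_abs0 hK).
by apply: (mulIf absx_neq0); rewrite -(Qp_absM hK) !mulVf // abs1.
Qed.

Lemma absX x m : abs (x ^+ m) = abs x ^+ m.
Proof.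
elim: m => [|m IHm]; first by rewrite !expr0 abs1.
by rewrite !exprS (Qp_absM hK) IHm.
Qed.

Lemma abs_add_lt x y e : abs x < e -> abs y < e -> abs (x + y) < e.
Proof. by move=> hx hy; apply: le_lt_trans (Qp_ultra hK x y) _; rewrite gt_max hx. Qed.

Lemma abs_eq_of_dist_lt x y : abs (x - y) < abs x -> abs y = abs x.
Proof.
move=> hxy; apply/eqP; rewrite eq_le; apply/andP; split.
  have -> : y = x + (y - x) by rewrite addrC subrK.
  by apply: le_trans (Qp_ultra hK _ _) _; rewrite ge_max abs_distC lexx ltW.
rewrite leNgt; apply/negP => hyx.
by have := abs_add_lt _ _ _ hxy hyx; rewrite subrK ltxx.
Qed.

Lemma Qp_pchar0 : has_pchar0 K.
Proof.
apply/pcharf0P => m; rewrite -(Qp_abs0 hK) -ratr_nat (Qp_abs_rat hK) /padic_abs.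
have [->|m_neq0] := eqVneq m 0%N; first by rewrite eqxx.
rewrite pnatr_eq0 (negbTE m_neq0) expfz_eq0 pnatr_eq0.
by rewrite eqn0Ngt prime_gt0 ?andbF.
Qed.

Lemma abs_intr_le1 (z : int) : abs z%:~R <= 1.
Proof.
have abs_natr_le1 m : abs m%:R <= 1.
  elim: m => [|m IHm]; first by rewrite abs0.
  by rewrite mulrS; apply: le_trans (Qp_ultra hK _ _) _; rewrite ge_max abs1 lexx.
by case: z => m; rewrite ?NegzE ?mulrNz ?absN abs_natr_le1.
Qed.

Lemma abs_natr_p : abs p%:R = (p%:Q)^-1.
Proof.
rewrite -ratr_nat (Qp_abs_rat hK) /padic_abs /padic_val pnatr_eq0 eqn0Ngt prime_gt0 //=.
by rewrite (numq_int p) (denq_int p) logn1 logn_prime // eqxx subr0 exprN1.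
Qed.

Lemma invp_lt1 : (p%:Q)^-1 < 1.
Proof. by rewrite invf_lt1 ?ltr0n ?ltr1n ?prime_gt0 ?prime_gt1. Qed.

Lemma abs_ratr_digit_term (a e : int) : 0 < e ->
  abs (ratr (a%:~R * (p%:Q) ^ e)) <= (p%:Q)^-1.
Proof.
case: e => [[|m]|m] //= _.
rewrite (ratrM Qp_pchar0) ratr_int (ratrX Qp_pchar0) ratr_nat (Qp_absM hK) absX abs_natr_p.
apply: le_trans (ler_piMl _ (abs_intr_le1 a)) _; first by rewrite exprn_ge0 ?invr_ge0.
have p_inv_ge0 : 0 <= (p%:Q)^-1 by rewrite invr_ge0 ler0z.
by rewrite exprS ler_piMr // exprn_ile1 // ltW // invp_lt1.
Qed.

Lemma browkin_partial_sum_split r (a : nat -> int) N : (`|1 - r| <= N)%N ->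
  \sum_(k < N) (a k)%:~R * (p%:Q) ^ (k%:Z + r) =
  browkin_s_of p r a + \sum_(k < N | 0 < k%:Z + r) (a k)%:~R * (p%:Q) ^ (k%:Z + r).
Proof.
move=> le_sN; rewrite (bigID (fun k : 'I_N => k%:Z + r <= 0)) /=.
congr (_ + _); last by apply: eq_bigl => k; rewrite ltNge.
rewrite /browkin_s_of (big_ord_widen_cond N (fun k => k%:Z + r <= 0)
  (fun k => (a k)%:~R * (p%:Q) ^ (k%:Z + r)) le_sN).
by apply: eq_bigl => k; apply/idP/andP => [hk|[]//]; split=> //; lia.
Qed.

Lemma abs_ratr_tail_le r (a : nat -> int) N :
  abs (ratr (\sum_(k < N | 0 < k%:Z + r) (a k)%:~R * (p%:Q) ^ (k%:Z + r))) <= (p%:Q)^-1.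
Proof.
apply: (big_ind (fun q : rat => abs (ratr q) <= (p%:Q)^-1)).
- by rewrite (ratr_int _ 0) abs0 invr_ge0 ler0z.
- move=> u v hu hv; rewrite (ratrD Qp_pchar0).
  by apply: le_trans (Qp_ultra hK _ _) _; rewrite ge_max hu.
- by move=> k; apply: abs_ratr_digit_term.
Qed.

Lemma browkin_s_dist_lt1 x q : browkin_s p abs x q -> abs (x - ratr q) < 1.
Proof.
move=> [r [a [[_ approx] ->]]].
have [N0 hN0] := approx 1 ltr01.
have := hN0 _ (leq_maxl N0 `|1 - r|).
rewrite (browkin_partial_sum_split _ _ _ (leq_maxr N0 _)) (ratrD Qp_pchar0).
set s := ratr _; set t := ratr _ => close.
have -> : x - s = (x - (s + t)) + t by rewrite opprD addrA subrK.
exact: abs_add_lt close (le_lt_trans (abs_ratr_tail_le _ _ _) invp_lt1).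
Qed.

Lemma browkin_s_same_dist_lt1 x y q :
  browkin_s p abs x q -> browkin_s p abs y q -> abs (x - y) < 1.
Proof.
move=> sx sy; have -> : x - y = (x - ratr q) + (ratr q - y) by rewrite addrA subrK.
by rewrite abs_add_lt ?browkin_s_dist_lt1 // abs_distC browkin_s_dist_lt1.
Qed.

Lemma abs_inv_browkin_gt1 x q :
  browkin_s p abs x q -> x != ratr q -> 1 < abs (x - ratr q)^-1.
Proof.
move=> sx xq; rewrite absV invf_gt1 ?browkin_s_dist_lt1 //.
by rewrite lt_neqAle (Qp_abs_ge0 hK) eq_sym (Qp_abs0 hK) subr_eq0 xq.
Qed.

Lemma abs_browkin_s_gt1 y r : browkin_s p abs y r -> 1 < abs y -> abs (ratr r) = abs y.
Proof.
move=> sy y_gt1; apply: abs_eq_of_dist_lt.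
exact: lt_trans (browkin_s_dist_lt1 _ _ sy) y_gt1.
Qed.

Section CompleteQuotients.
Context {a : nat -> K} {b : nat -> rat} {n : nat}.
Hypothesis ha : browkin_cf_seq p abs a b n.

Lemma cf_seq_abs_gt1 i : (i < n)%N -> 1 < abs (a i.+1).
Proof.
move=> lt_in; have [ai_neq ->] := ha.2 i lt_in.
exact: abs_inv_browkin_gt1 _ _ (ha.1 i (ltnW lt_in)) ai_neq.
Qed.

Lemma cf_seq_abs_succ i : (i < n)%N -> abs (a i.+1) = abs (ratr (b i.+1)).
Proof.
by move=> lt_in; rewrite (abs_browkin_s_gt1 _ _ (ha.1 _ lt_in)) ?cf_seq_abs_gt1.
Qed.

Lemma cf_seq_quotient_gt1 j : (0 < j <= n)%N -> 1 < abs (ratr (b j)).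
Proof. by case: j => // i lt_in; rewrite -cf_seq_abs_succ ?cf_seq_abs_gt1. Qed.

End CompleteQuotients.

Lemma abs_Bcf_succ (b : nat -> rat) i :
  1 < abs (ratr (b i.+1)) -> abs (ratr (Bpair b i).1) < abs (ratr (Bcf b i)) ->
  abs (ratr (Bcf b i.+1)) = abs (ratr (b i.+1)) * abs (ratr (Bcf b i)).
Proof.
move=> b_gt1 B_lt; rewrite {1}/Bcf BpairS /= (ratrD Qp_pchar0) (ratrM Qp_pchar0).
rewrite -(Qp_absM hK); apply: abs_eq_of_dist_lt.
rewrite opprD addrA subrr sub0r absN (Qp_absM hK); apply: (lt_le_trans B_lt).
by rewrite ler_peMl ?(Qp_abs_ge0 hK) ?ltW.
Qed.

Lemma abs_Bpair_lt (b : nat -> rat) n :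
  (forall j, (0 < j <= n)%N -> 1 < abs (ratr (b j))) ->
  forall i, (i <= n)%N -> abs (ratr (Bpair b i).1) < abs (ratr (Bcf b i)).
Proof.
move=> b_gt1; elim=> [|i IHi] le_in.
  by rewrite /Bcf /= mulr0 add0r (ratr_int _ 0) (ratr_int _ 1) abs0 abs1.
have bi_gt1 := b_gt1 i.+1 le_in.
rewrite BpairS /= abs_Bcf_succ ?IHi 1?ltnW //.
by rewrite ltr_pMl // (le_lt_trans (Qp_abs_ge0 hK _) (IHi (ltnW le_in))).
Qed.

Lemma cf_seq_dist {a a' : nat -> K} {b : nat -> rat} {n : nat} :
  browkin_cf_seq p abs a b n -> browkin_cf_seq p abs a' b n ->
  forall i, (i <= n)%N ->
  abs (a i - a' i) = abs (a 0%N - a' 0%N) * abs (ratr (Bcf b i)) ^+ 2.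
Proof.
move=> ha ha'; have b_gt1 := cf_seq_quotient_gt1 ha.
elim=> [|i IHi] le_in.
  by rewrite /Bcf /= mulr0 add0r (ratr_int _ 1) abs1 expr1n mulr1.
have [ai_neq ai1] := ha.2 i le_in; have [a'i_neq a'i1] := ha'.2 i le_in.
have -> : a i.+1 - a' i.+1 = (a' i - a i) * (a i.+1 * a' i.+1).
  by rewrite ai1 a'i1 inv_shift_sub.
rewrite abs_Bcf_succ ?b_gt1 ?(abs_Bpair_lt _ _ b_gt1 i (ltnW le_in)) //.
rewrite !(Qp_absM hK (_ - _)) (Qp_absM hK (a i.+1)) abs_distC IHi 1?ltnW //.
rewrite (cf_seq_abs_succ ha) // (cf_seq_abs_succ ha') //.
by rewrite exprMn; ring.
Qed.

End PadicField.

Theorem lemma1 (p : nat) (hp : prime p) (hodd : odd p)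
  (K : fieldType) (abs : K -> rat) (hK : is_Qp p abs)
  (alpha beta : K) (b : nat -> rat) (n : nat) :
  browkin_cf_prefix p abs alpha b n ->
  browkin_cf_prefix p abs beta b n ->
  abs (alpha - beta) < 1 / (padic_abs p (Bcf b n)) ^+ 2.
Proof.
move=> [a [<- ha]] [a' [<- ha']].
have {}ha : browkin_cf_seq p abs a b n := ha.
have {}ha' : browkin_cf_seq p abs a' b n := ha'.
have Bn_gt0 : 0 < abs (ratr (Bcf b n)).
  apply: le_lt_trans (Qp_abs_ge0 hK _) _.
  exact: abs_Bpair_lt hK hp _ _ (cf_seq_quotient_gt1 hK hp ha) n (leqnn n).
have an_close : abs (a n - a' n) < 1.
  exact: browkin_s_same_dist_lt1 hK hp _ _ _ (ha.1 n (leqnn n)) (ha'.1 n (leqnn n)).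
rewrite -(Qp_abs_rat hK) ltr_pdivlMr ?exprn_gt0 //.
by rewrite -(cf_seq_dist hK hp ha ha').
Qed.
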